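(* Let $G$ be a finite group, let $H,K\leq G$, and let $p,q$ be primes. Then, for the prime ideals $\mathfrak{p}_{L,r}$ of the Burnside $G$-Tambara functor $\underline{A}_G$: (i) $\mathfrak{p}_{K,0}\subseteq\mathfrak{p}_{H,0}$ if and only if $H\preccurlyeq_G K$; (ii) $\mathfrak{p}_{H,0}\subsetneq\mathfrak{p}_{H,p}$ and $\mathfrak{p}_{H,p}\not\subseteq\mathfrak{p}_{K,0}$; (iii) $\mathfrak{p}_{K,p}\subseteq\mathfrak{p}_{H,q}$ if and only if $p=q$ and $O^p(H)\preccurlyeq_G O^p(K)$; (iv) $\mathfrak{p}_{K,0}\subseteq\mathfrak{p}_{H,p}$ if and only if $O^p(H)\preccurlyeq_G K$.
   Context: $A(H)$ is the Burnside ring of a finite group $H$; for $I\le H$, $\varphi^I_H\colon A(H)\to\mathbb{Z}$ is the ring map $X\mapsto|X^I|$, and for $r$ a prime or $0$, $\varphi^I_{H,r}$ is its composite with $\mathbb{Z}\to\mathbb{Z}/r\mathbb{Z}$. The Burnside $G$-Tambara functor $\underline{A}_G$ has $\underline{A}_G(G/H)=A(H)$ with restriction of action, transfer $K\times_H-$, norm $\mathrm{Map}_H(K,-)$ and conjugations. For $L\le G$ and $r$ a prime or $0$, $\mathfrak{p}_{L,r}$ is the (prime) Tambara ideal with $\mathfrak{p}_{L,r}(G/H)=\bigcap_{I\le H,\ I\preccurlyeq_G L}\ker(\varphi^I_{H,r})$, where $I\preccurlyeq_G L$ means $I$ is conjugate in $G$ to a subgroup of $L$. For $H\le G$ and $p$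 prime, $O^p(H)$ is the intersection of all normal subgroups $I\trianglelefteq H$ with $|H:I|$ a power of $p$. *)

From mathcomp Require Import all_boot all_order all_algebra all_fingroup all_solvable.
Set Implicit Arguments. Unset Strict Implicit. Unset Printing Implicit Defensive.
Import GRing.Theory Num.Theory.
Local Open Scope group_scope.

Section Burnside.
Variable gT : finGroupType.

Definition subconjG (G : {set gT}) (I L : {set gT}) : Prop :=
  exists2 g, g \in G & I :^ g \subset L.

Definition mark_coset (H I J : {set gT}) : nat :=
  #|[set C in lcosets I H | [forall j in J, j *: C == C]]|.

(* An element of A(H) is represented as a Z-linear combination
   sum_I c I [H/I] of transitive H-sets, I ranging over the subgroups of H.
   phi^J_H of such an element: *)
Definition burnside_mark (H : {set gT}) (c : {set gT} -> int) (J : {set gT}) : int :=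
  (\sum_(I : {set gT} | (I \subset H) && group_set I) c I * (mark_coset H I J)%:Z)%R.

Definition in_primeTI (G L : {set gT}) (r : nat) (H : {set gT}) (c : {set gT} -> int)
  : Prop :=
  forall I : {group gT}, I \subset H -> subconjG G I L ->
    (r%:Z %| burnside_mark H c I)%Z.

(* inclusion of Tambara ideals p_{K,r} ⊆ p_{L,s}: levelwise at every orbit G/H *)
Definition primeTI_sub (G K : {set gT}) (r : nat) (L : {set gT}) (s : nat) : Prop :=
  forall H : {group gT}, H \subset G ->
    forall c : {set gT} -> int, in_primeTI G K r H c -> in_primeTI G L s H c.

Definition Oup (p : nat) (H : {set gT}) : {set gT} :=
  \bigcap_(I : {group gT} | (I <| H) && p.-nat #|H : I|) (I : {set gT}).

End Burnside.

(* Identify x in A(H) with its marks phi^J(x), J <= H.  The image of the mark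
   map contains every conjugation-invariant f satisfying the Burnside
   congruences #|N_H(L)| %| sum_(a in N_H(L)) f <<a, L>> (proved by peeling
   off multiples of [H/J] for J of decreasing order).  In particular it
   contains |H| delta_H, and, when O = O^p(O), also |O|_p' delta_O: only the
   L with O/L cyclic contribute to the congruence at L, and such quotients are
   p'-groups.  Evaluated at the orbit G/H, resp. G/O^p(H), these elements
   separate the ideals and give the forward implications.  The reverse ones
   come from phi^J(x) = phi^(O^p(J))(x) mod p, since J/O^p(J) is a p-group
   acting on the O^p(J)-fixed points of each H-set. *)

From mathcomp Require Import all_boot all_order all_algebra all_fingroup all_solvable.
Set Implicit Arguments. Unset Strict Implicit. Unset Printing Implicit Defensive.
Import GRing.Theory.
Local Open Scope group_scope.

Lemma card_afixJ (gT : finGroupType) (T : finType) (to : {action gT &-> T})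
    (S : {set T}) (A : {set gT}) n :
  n \in 'N(S | to) -> #|'Fix_(S | to)(A :^ n)| = #|'Fix_(S | to)(A)|.
Proof.
have le_fix B m : m \in 'N(S | to) ->
    #|'Fix_(S | to)(B)| <= #|'Fix_(S | to)(B :^ m)|.
  move=> nSm; rewrite -(card_setact to _ m) setactE; apply: subset_leq_card.
  apply/subsetP => _ /imsetP[x /setIP[Sx fixx] ->].
  by rewrite inE (astabs_act _ nSm) Sx -sub_astab1 astab1_act conjSg sub_astab1.
move=> nSn; apply/eqP; rewrite eqn_leq le_fix // andbT.
by rewrite -{2}(conjsgK n A) le_fix ?groupV.
Qed.

Section Marks.
Variable gT : finGroupType.
Implicit Types (N I J L : {group gT}) (A C : {set gT}).

Definition lmul_act C (a : gT) : {set gT} := a^-1 *: C.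

Lemma lmul_act1 : lmul_act^~ 1 =1 id.
Proof. by move=> C; rewrite /lmul_act invg1 lcoset1. Qed.

Lemma lmul_actM C : act_morph lmul_act C.
Proof. by move=> a b; rewrite /lmul_act invMg lcosetM. Qed.

Canonical lmul_action := TotalAction lmul_act1 lmul_actM.

Lemma lmul_act_fixed C a : (lmul_action C a == C) = (a *: C == C).
Proof.
rewrite /= /lmul_act; apply/eqP/eqP => E; rewrite -{1}E -lcosetM.
  by rewrite mulgV lcoset1.
by rewrite mulVg lcoset1.
Qed.

Lemma mark_cosetE (H A J : {set gT}) :
  mark_coset H A J = #|'Fix_(lcosets A H | lmul_action)(J)|.
Proof.
apply: eq_card => C; rewrite inE [in RHS]inE; congr (_ && _).
apply/forall_inP/afixP => fixC a Ja.
  by apply/eqP; rewrite lmul_act_fixed fixC.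
by rewrite -lmul_act_fixed fixC.
Qed.

Lemma lcoset_fixed J A x :
  (x *: J \in 'Fix_lmul_action(A)) = (A :^ x \subset J).
Proof.
apply/afixP/subsetP => [fixJ _ /imsetP[a Aa ->] | sAJ a Aa].
  have /eqP := fixJ a Aa; rewrite lmul_act_fixed => /eqP aJ.
  by rewrite conjgE -mem_lcoset -aJ -lcosetM lcoset_refl.
apply/eqP; rewrite lmul_act_fixed -lcosetM conjgC lcosetM lcoset_id //.
by rewrite sAJ ?memJ_conjg.
Qed.

Lemma acts_lcosets N I : [acts N, on lcosets I N | lmul_action].
Proof.
apply/subsetP => a Na; rewrite !inE; apply/subsetP => _ /lcosetsP[x Nx ->].
rewrite inE /= /lmul_act -lcosetM; apply/lcosetsP.
by exists (a^-1 * x); rewrite ?groupM ?groupV.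
Qed.

Lemma mark_coset_top N A : A \subset N -> mark_coset N N A = 1%N.
Proof.
move=> sAN; rewrite mark_cosetE -(cards1 (N : {set gT})).
apply: eq_card => C; rewrite in_setI in_set1.
apply/andP/eqP => [[/lcosetsP[x Nx ->] _] | ->].
  exact: lcoset_id.
split; first by apply/lcosetsP; exists 1; rewrite ?lcoset1.
by have := lcoset_fixed N A 1; rewrite lcoset1 conjsg1 sAN.
Qed.

Lemma mark_coset_neq0 N J A :
  mark_coset N J A != 0%N -> exists2 x, x \in N & A :^ x \subset J.
Proof.
rewrite mark_cosetE -lt0n => /card_gt0P[_ /setIP[/lcosetsP[x Nx ->]]].
by rewrite lcoset_fixed; exists x.
Qed.

Lemma mark_coset_eq0 N J L :
  (#|J| < #|L|)%N -> mark_coset N J L = 0%N.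
Proof.
move=> ltJL; apply/eqP; apply: contraTT ltJL => /mark_coset_neq0[x _ sLxJ].
by rewrite -leqNgt -(cardJg L x) subset_leq_card.
Qed.

Lemma mark_coset_self N J : J \subset N -> mark_coset N J J = #|'N_N(J) : J|.
Proof.
move=> sJN; rewrite mark_cosetE -card_lcosets.
apply: eq_card => C; rewrite in_setI.
apply/andP/lcosetsP => [[/lcosetsP[x Nx ->]] | [x]].
  rewrite lcoset_fixed => sJxJ; exists x => //; rewrite inE Nx.
  by apply/normP/eqP; rewrite eqEcard sJxJ cardJg leqnn.
case/setIP=> Nx /normP nJx ->; rewrite lcoset_fixed nJx.
by split=> //; apply/lcosetsP; exists x.
Qed.

Lemma mark_cosetJ N I A n : n \in N -> mark_coset N I (A :^ n) = mark_coset N I A.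
Proof.
by move=> Nn; rewrite !mark_cosetE card_afixJ // (subsetP (acts_lcosets N I)).
Qed.

Lemma mark_coset_congruence N I L :
  (#|'N_N(L)| %| \sum_(a in 'N_N(L)) mark_coset N I <<a |: L>>)%N.
Proof.
set Y := 'Fix_(lcosets I N | lmul_action)(L).
have actY : [acts 'N_N(L), on Y | lmul_action].
  apply: actsI; first exact: subset_trans (subsetIl _ _) (acts_lcosets N I).
  exact: acts_fix_norm (subsetIr _ _).
rewrite (eq_bigr (fun a => #|'Fix_(Y | lmul_action)[a]|)).
  by rewrite Frobenius_Cauchy // dvdn_mull.
by move=> a _; rewrite /Y mark_cosetE afix_gen afixU setICA setIC.
Qed.

Lemma mark_coset_modp N I J J0 (p : nat) :
  J \subset N -> J0 <| J -> p.-nat #|J : J0| ->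
  mark_coset N I J = mark_coset N I J0 %[mod p].
Proof.
move=> sJN /andP[sJ0J nJ0J] pJ; rewrite !mark_cosetE.
set S := 'Fix_(lcosets I N | lmul_action)(J0).
have -> : 'Fix_(lcosets I N | lmul_action)(J) = 'Fix_(S | lmul_action)(J).
  by rewrite /S -setIA (setIidPr (afixS _ sJ0J)).
have actS : [acts J, on S | lmul_action].
  apply: actsI; first exact: subset_trans sJN (acts_lcosets N I).
  exact: acts_fix_norm.
apply/esym/eqP; rewrite -(cardsID 'Fix_lmul_action(J)) eqn_mod_dvd ?leq_addr //.
rewrite addKn; have: [acts J, on S :\: 'Fix_lmul_action(J) | lmul_action].
  rewrite actsD // -(setIidPr (subsetT J)).
  by apply: subset_trans (acts_subnorm_fix _ _); rewrite setIS ?normG.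
move/acts_sum_card_orbit <-; apply: dvdn_sum => _ /imsetP[C /setDP[SC nfixC] ->].
have [k oC] : {k | #|orbit lmul_action J C| = (p ^ k)%N}.
  apply: p_natP; apply: pnat_dvd pJ; rewrite card_orbit.
  apply: indexgS; apply/subsetP => j J0j; rewrite inE (subsetP sJ0J) //=.
  by move: SC => /setIP[_ /afixP/(_ j J0j) fixC]; apply/astab1P.
case: k oC => [/card_orbit1 orbC | k ->]; last by rewrite expnS dvdn_mulr.
by case/negP: nfixC; apply/orbit1P.
Qed.

End Marks.

Section PResidual.
Variables (gT : finGroupType) (p : nat).
Implicit Types (X H J L M O : {group gT}).

Lemma dvdn_index_normal J H M : J \subset H -> M <| H -> (#|J : M| %| #|H : M|)%N.
Proof.
move=> sJH /andP[_ nMH]; have nMJ := subset_trans sJH nMH.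
by rewrite -!card_quotient // cardSg ?quotientS.
Qed.

Lemma pnat_indexI X J M : J \subset X -> M <| X ->
  p.-nat #|X : J| -> p.-nat #|X : M| -> p.-nat #|X : J :&: M|.
Proof.
move=> sJX nMX pJ pM; rewrite -(Lagrange_index sJX (subsetIl J M)) pnatM pJ /=.
by rewrite indexgI; apply: pnat_dvd pM; apply: dvdn_index_normal.
Qed.

Lemma pnat_index_bigcap X (I : finType) (P : pred I) (F : I -> {group gT}) :
    (forall i, P i -> F i <| X) -> (forall i, P i -> p.-nat #|X : F i|) ->
  p.-nat #|X : X :&: \bigcap_(i | P i) F i|.
Proof.
move=> nFX pF.
pose good S := [&& group_set S, X \subset 'N(S) & p.-nat #|X : X :&: S|].
suff /and3P[] : good (\bigcap_(i | P i) F i) by [].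
apply: (big_ind good) => [|S0 T0 /and3P[/isgroupP[S ->] nSX pS] | i Pi].
- by rewrite /good groupP normT subsetT setIT indexgg.
- case/and3P=> /isgroupP[T ->] nTX pT; rewrite /good group_setI normsI //=.
  rewrite setIIr pnat_indexI ?subsetIl //.
  by rewrite /normal subsetIl normsI ?normG.
rewrite /good groupP normal_norm ?nFX //= (setIidPr (normal_sub (nFX i Pi))).
exact: pF.
Qed.

Lemma Oup_group_set (H : {set gT}) : group_set (Oup p H).
Proof. exact: group_set_bigcap. Qed.

Canonical Oup_group (H : {set gT}) := group (Oup_group_set H).

Lemma Oup_min H M : M <| H -> p.-nat #|H : M| -> Oup p H \subset M.
Proof. by move=> nMH pM; rewrite /Oup (bigcap_inf M) ?nMH. Qed.

Lemma Oup_sub H : Oup p H \subset H.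
Proof. by rewrite Oup_min ?normal_refl ?indexgg. Qed.

Lemma Oup_normal H : Oup p H <| H.
Proof.
rewrite /normal Oup_sub /Oup norms_bigcap //.
by apply/bigcapsP => M /andP[/normal_norm].
Qed.

Lemma Oup_pindex H : p.-nat #|H : Oup p H|.
Proof.
have := @pnat_index_bigcap H _ (fun M : {group gT} => (M <| H) && p.-nat #|H : M|) id.
by rewrite (setIidPr (Oup_sub H)); apply=> M /andP[].
Qed.

Lemma OupJ H x : Oup p (H :^ x) = Oup p H :^ x.
Proof.
have sub_conj (K : {group gT}) y : Oup p (K :^ y) \subset Oup p K :^ y.
  by rewrite Oup_min ?normalJ ?Oup_normal ?indexJg ?Oup_pindex.
apply/eqP; rewrite eqEsubset sub_conj /= sub_conjg.
by have := sub_conj [group of H :^ x] x^-1; rewrite /= conjsgK.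
Qed.

Lemma OupS J H : J \subset H -> Oup p J \subset Oup p H.
Proof.
move=> sJH; have nOH := Oup_normal H.
rewrite (subset_trans _ (subsetIr J _)) // Oup_min /= ?(normalGI sJH nOH) //.
by rewrite indexgI; apply: pnat_dvd (Oup_pindex H); apply: dvdn_index_normal.
Qed.

Lemma Oup_id H : Oup p (Oup p H) = Oup p H.
Proof.
apply/eqP; rewrite eqEsubset Oup_sub /=.
have nOH := Oup_normal H; set O := Oup_group H.
have nMH : Oup p O <| H.
  rewrite /normal (subset_trans (Oup_sub O) (normal_sub nOH)).
  by apply/normsP => h Hh; rewrite -OupJ (normsP (normal_norm nOH)).
rewrite Oup_min // -(Lagrange_index (normal_sub nOH) (Oup_sub O)).
by rewrite pnatM !Oup_pindex.
Qed.

Lemma Oup_nil_quotient_p'group O L : Oup p O = O -> L <| O -> nilpotent (O / L) ->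
  p^'.-group (O / L).
Proof.
move=> perfO nLO nilQ.
have /and3P[_ _] := nilpotent_pcore_Hall p^' nilQ; rewrite pnatNK => pQ.
pose M := (coset L @*^-1 'O_p^'(O / L))%G.
have nMO : M <| O by rewrite -{1}(quotientGK nLO) cosetpre_normal pcore_normal.
have pM : p.-nat #|O : M| by rewrite -{1}(quotientGK nLO) index_cosetpre.
have sOM : O \subset M by rewrite -{1}perfO Oup_min.
apply: pgroupS (pcore_pgroup p^' (O / L)).
by have := quotientS L sOM; rewrite /= cosetpreK.
Qed.

End PResidual.

(* Serves both as the coefficients of k [N/J] and as the mark vector k delta_J. *)
Definition delta_at (gT : finGroupType) (J : {set gT}) (k : int) (S : {set gT}) :
  int := if S == J then k else 0%R.

Section MarkVectors.
Variables (gT : finGroupType) (N : {group gT}).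
Implicit Types (f g : {set gT} -> int) (J L : {group gT}).
Local Open Scope ring_scope.

Definition mark_vector f :=
  exists c, forall L, L \subset N -> burnside_mark N c L = f L.

Definition conj_invariant f :=
  forall L n, L \subset N -> n \in N -> f (L :^ n) = f L.

Definition burnside_congruent f :=
  forall L, L \subset N ->
    (#|'N_N(L)|%:Z %| \sum_(a in 'N_N(L)) f <<a |: L>>)%Z.

Definition vanishing_above k f :=
  forall L, L \subset N -> (k < #|L|)%N -> f L = 0.

Lemma burnside_mark_delta J k (A : {set gT}) :
  J \subset N -> burnside_mark N (delta_at J k) A = k * (mark_coset N J A)%:Z.
Proof.
move=> sJN; rewrite /burnside_mark (bigD1 (J : {set gT})) ?sJN ?groupP //=.
rewrite /delta_at eqxx big1 ?addr0 // => I /andP[_ /negbTE->].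
by rewrite mul0r.
Qed.

Lemma burnside_mark_delta_top k (A : {set gT}) :
  A \subset N -> burnside_mark N (delta_at N k) A = k.
Proof. by move=> sAN; rewrite burnside_mark_delta // mark_coset_top // mulr1. Qed.

Lemma mark_vectorD_mark f g J k : J \subset N -> mark_vector g ->
  (forall L, L \subset N -> f L = g L + k * (mark_coset N J L)%:Z) -> mark_vector f.
Proof.
move=> sJN [c markc] fE; exists (fun S => c S + delta_at J k S) => L sLN.
rewrite fE // -markc // -burnside_mark_delta // /burnside_mark -big_split /=.
by apply: eq_bigr => I _; rewrite mulrDl.
Qed.

Lemma burnside_congruent_mark J :
  burnside_congruent (fun S => (mark_coset N J S)%:Z).
Proof.
move=> L _; rewrite -(big_morph Posz PoszD (erefl 0%Z)) dvdzE /=.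
exact: mark_coset_congruence.
Qed.

Lemma congruent_index_dvd f J : burnside_congruent f ->
  vanishing_above #|J| f -> J \subset N -> (#|'N_N(J) : J|%:Z %| f J)%Z.
Proof.
move=> congf vanf sJN; have sJNJ : J \subset 'N_N(J) by rewrite subsetI sJN normG.
have sumE : \sum_(a in 'N_N(J)) f <<a |: J>> = f J *+ #|J|.
  rewrite (big_setID (J : {set gT})) /= (setIidPr sJNJ) [X in _ + X]big1 ?addr0.
    rewrite -sumr_const; apply: eq_bigr => a Ja.
    by rewrite (setUidPr _) ?sub1set ?genGid.
  move=> a /setDP[/setIP[Na _] notJa]; apply: (vanf <<a |: J>>%G).
    by rewrite /= gen_subG subUset sub1set Na sJN.
  rewrite proper_card // properE (subset_trans (subsetUr _ _) (subset_gen _)).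
  by apply: contra notJa => /subsetP->; rewrite ?mem_gen ?setU11.
have := congf J sJN; rewrite sumE -(Lagrange sJNJ) PoszM -mulr_natl natz.
by rewrite dvdz_mul2l // eqz_nat -lt0n cardG_gt0.
Qed.

Definition level_support k f :=
  [set L : {group gT} | [&& L \subset N, #|L| == k & f L != 0]].

Definition strip_orbit f J S :=
  f S - (f J %/ #|'N_N(J) : J|%:Z)%Z * (mark_coset N J S)%:Z.

Lemma conj_invariant_strip f J : conj_invariant f -> conj_invariant (strip_orbit f J).
Proof. by move=> conjf L n sLN Nn; rewrite /strip_orbit conjf // mark_cosetJ. Qed.

Lemma burnside_congruent_strip f J :
  burnside_congruent f -> burnside_congruent (strip_orbit f J).
Proof.
move=> congf L sLN; rewrite /strip_orbit sumrB -mulr_sumr rpredB ?congf //.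
by rewrite dvdz_mull ?burnside_congruent_mark.
Qed.

Lemma vanishing_above_strip f J :
  vanishing_above #|J| f -> vanishing_above #|J| (strip_orbit f J).
Proof.
move=> vanf L sLN ltJL.
by rewrite /strip_orbit vanf // mark_coset_eq0 // mulr0 subr0.
Qed.

Lemma strip_orbit_self f J : burnside_congruent f -> vanishing_above #|J| f ->
  J \subset N -> strip_orbit f J J = 0.
Proof.
move=> congf vanf sJN; rewrite /strip_orbit mark_coset_self // divzK ?subrr //.
exact: congruent_index_dvd.
Qed.

Lemma level_support_strip f J : conj_invariant f -> burnside_congruent f ->
    vanishing_above #|J| f -> J \subset N ->
  level_support #|J| (strip_orbit f J) \subset level_support #|J| f :\ J.
Proof.
move=> conjf congf vanf sJN; have gJ0 := strip_orbit_self congf vanf sJN.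
apply/subsetP => L; rewrite !inE => /and3P[sLN /eqP cL gL].
have [markL0 | /mark_coset_neq0[x Nx sLxJ]] := eqVneq (mark_coset N J L) 0%N.
  move: gL; rewrite /strip_orbit markL0 mulr0 subr0 => fL.
  rewrite sLN cL eqxx fL !andbT.
  by apply/eqP=> LJ; move/eqP: markL0; rewrite LJ mark_coset_self // eqn0Ngt indexg_gt0.
have LxJ : L :^ x = J by apply/eqP; rewrite eqEcard sLxJ cardJg cL leqnn.
by move: gL; rewrite -(conj_invariant_strip J conjf sLN Nx) LxJ gJ0 eqxx.
Qed.

Lemma mark_vector_level k :
    (forall f, conj_invariant f -> burnside_congruent f ->
       vanishing_above k f -> mark_vector f) ->
  forall f, conj_invariant f -> burnside_congruent f ->
    vanishing_above k.+1 f -> mark_vector f.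
Proof.
move=> IHk f; have [n] := ubnP #|level_support k.+1 f|.
elim: n f => // n IHn f lt_supp_n conjf congf vanf.
have [supp0 | [J suppJ]] := set_0Vmem (level_support k.+1 f).
  apply: IHk => // L sLN; rewrite leq_eqVlt => /predU1P[cL | ]; last exact: vanf.
  apply/eqP; apply: contraFT (in_set0 L) => fL.
  by rewrite -supp0 inE sLN -cL eqxx.
have := suppJ; rewrite inE => /and3P[sJN /eqP cJ _].
rewrite -cJ in vanf lt_supp_n suppJ.
apply: (@mark_vectorD_mark _ (strip_orbit f J) J (f J %/ #|'N_N(J) : J|%:Z)%Z).
- by [].
- apply: IHn; rewrite -?cJ.
  + apply: leq_ltn_trans (subset_leq_card (level_support_strip conjf congf vanf sJN)) _.
    by rewrite (cardsD1 J) suppJ add1n ltnS in lt_supp_n.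
  + exact: conj_invariant_strip.
  + exact: burnside_congruent_strip.
  + exact: vanishing_above_strip.
- by move=> L _; rewrite /strip_orbit subrK.
Qed.

Theorem congruent_mark_vector f :
  conj_invariant f -> burnside_congruent f -> mark_vector f.
Proof.
move=> conjf congf; have vanN : vanishing_above #|N| f.
  by move=> L sLN; rewrite ltnNge subset_leq_card.
elim: #|N| f conjf congf vanN => [|k IHk] f conjf congf vanf.
  exists (fun _ => 0) => L sLN; rewrite vanf ?cardG_gt0 //.
  by rewrite /burnside_mark big1 // => I _; rewrite mul0r.
exact: (mark_vector_level IHk).
Qed.

End MarkVectors.

Lemma dvdn_card_mulg_closed (gT : finGroupType) (A : {set gT}) (L : {group gT}) :
  A * L \subset A -> (#|L| %| #|A|)%N.
Proof.
move=> sALA; have actA : [acts L, on A | 'R].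
  apply/subsetP => l Ll; rewrite !inE; apply/subsetP => a Aa.
  by rewrite inE /= (subsetP sALA) ?mem_mulg.
rewrite -(acts_sum_card_orbit actA); apply: dvdn_sum => _ /imsetP[a _ ->].
by rewrite orbitR card_lcoset.
Qed.

Lemma quotient_gen_cycle (gT : finGroupType) (L : {group gT}) (a : gT) :
  a \in 'N(L) -> <<a |: L>> / L = <[coset L a]>.
Proof.
move=> nLa; have -> : <<a |: L>> = L <*> <[a]>.
  by rewrite /cycle joing_idr joingE setUC.
by rewrite quotientYidl ?cycle_subG // quotient_cycle.
Qed.

Section DeltaMarks.
Variables (gT : finGroupType) (N : {group gT}).
Implicit Types (L M : {group gT}).
Local Open Scope ring_scope.

Lemma mark_vector_delta (m : nat) :
    (forall L, L <| N -> cyclic (N / L) -> (#|N : L| %| m)%N) ->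
  mark_vector N (delta_at N m%:Z).
Proof.
move=> dvd_m; apply: congruent_mark_vector.
  move=> L n sLN Nn; rewrite /delta_at; congr (if _ then _ else _).
  apply/eqP/eqP => [LnN | ->]; last by rewrite conjGid.
  by rewrite -(conjsgK n L) LnN conjGid ?groupV.
move=> L sLN; set A := [set a in 'N_N(L) | <<a |: L>> == N].
have -> : \sum_(a in 'N_N(L)) delta_at N m%:Z <<a |: L>> = \sum_(a in A) m%:Z.
  rewrite big_mkcond [RHS]big_mkcond; apply: eq_bigr => a _.
  by rewrite /A /delta_at inE; case: (a \in _); case: (_ == _).
rewrite sumr_const -mulr_natr natz -PoszM dvdzE /=.
have [-> | [a0 Aa0]] := set_0Vmem A; first by rewrite cards0 muln0 dvdn0.
move: Aa0; rewrite inE => /andP[/setIP[Na0 nLa0] /eqP defN].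
have nLN : L <| N by rewrite /normal sLN -defN gen_subG subUset sub1set nLa0 normG.
have NLN : 'N_N(L) = N by apply/setIidPl; apply: normal_norm.
have dvdA : (#|L| %| #|A|)%N.
  apply: dvdn_card_mulg_closed; apply/subsetP => _ /mulsgP[a l Aa Ll ->].
  move: Aa; rewrite inE NLN => /andP[Na /eqP defNa].
  have Nl : l \in N by rewrite (subsetP sLN).
  have genL x : L \subset <<x |: L>> := subset_trans (subsetUr _ _) (subset_gen _).
  have genx x : x \in <<x |: L>> := mem_gen (setU11 x L).
  have genl x : l \in <<x |: L>> := subsetP (genL x) l Ll.
  rewrite inE NLN groupM //= -defNa eqEsubset !gen_subG !subUset !sub1set !genL.
  by rewrite groupM ?genx ?genl //= -{1}(mulgK l a) groupM ?groupV ?genx ?genl.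
rewrite NLN -(Lagrange (normal_sub nLN)) mulnC dvdn_mul // dvd_m //.
by rewrite -defN quotient_gen_cycle ?cycle_cyclic.
Qed.

Lemma mark_vector_delta_card : mark_vector N (delta_at N #|N|%:Z).
Proof. by apply: mark_vector_delta => L _ _; apply: dvdn_indexg. Qed.

Lemma mark_vector_delta_p'part (p : nat) :
  Oup p N = N -> mark_vector N (delta_at N (#|N|`_p^')%:Z).
Proof.
move=> perfN; apply: mark_vector_delta => L nLN /cyclic_abelian/abelian_nil nilNL.
have := Oup_nil_quotient_p'group perfN nLN nilNL.
rewrite /pgroup card_quotient ?normal_norm // => p'NL.
by rewrite -(part_pnat_id p'NL) partn_dvd ?dvdn_indexg.
Qed.

End DeltaMarks.

Section PrimeIdeals.
Variables (gT : finGroupType) (G : {group gT}).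
Implicit Types (H I J K L O : {group gT}) (A B C : {set gT}).

Lemma subconjP A B : reflect (subconjG G A B) [exists g in G, A :^ g \subset B].
Proof.
apply: (iffP exists_inP) => [[g Gg sAB] | [g Gg sAB]]; by exists g.
Qed.

Lemma subconj_sub A B : A \subset B -> subconjG G A B.
Proof. by exists 1; rewrite ?group1 ?conjsg1. Qed.

Lemma subconj_trans A B C : subconjG G A B -> subconjG G B C -> subconjG G A C.
Proof.
move=> [g Gg sAB] [h Gh sBC]; exists (g * h); first exact: groupM.
by rewrite conjsgM (subset_trans _ sBC) // conjSg.
Qed.

Lemma subconj_Oup (p : nat) J L : subconjG G J L -> subconjG G (Oup p J) (Oup p L).
Proof. by case=> g Gg sJL; exists g; rewrite // -OupJ OupS. Qed.

Lemma dvdz_burnside_mark_Oup (p : nat) L J c : J \subset L ->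
  (p%:Z %| burnside_mark L c J)%Z = (p%:Z %| burnside_mark L c (Oup p J))%Z.
Proof.
move=> sJL; set a := burnside_mark L c J; set b := burnside_mark L c (Oup p J).
have dvd_ab : (p%:Z %| (a - b)%R)%Z.
  rewrite /a /b /burnside_mark -sumrB rpred_sum // => I /andP[sIL /isgroupP[I' ->]].
  rewrite -mulrBr dvdz_mull // -eqz_mod_dvd !modz_nat eqz_nat; apply/eqP.
  by apply: mark_coset_modp; rewrite ?Oup_normal ?Oup_pindex.
by rewrite -[a](subrK b) rpredDl.
Qed.

Lemma primeTI_sub_subconj K L r : subconjG G L K -> primeTI_sub G K r L r.
Proof.
by move=> sLK H sHG c cK I sIH sIL; apply: cK sIH (subconj_trans sIL sLK).
Qed.

Lemma primeTI_sub_dvd K L r s : L \subset G -> primeTI_sub G K r L s -> (s %| r)%N.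
Proof.
move=> sLG incl; have cK : in_primeTI G K r L (delta_at L r%:Z).
  by move=> I sIL _; rewrite burnside_mark_delta_top.
have := incl L sLG _ cK L (subxx _) (subconj_sub (subxx _)).
by rewrite burnside_mark_delta_top.
Qed.

Lemma subconj_of_primeTI_sub K L O r s (m : nat) :
    O \subset G -> subconjG G O L -> mark_vector O (delta_at O m%:Z) ->
    ~~ (s %| m)%N -> primeTI_sub G K r L s ->
  subconjG G O K.
Proof.
move=> sOG sOL [c markc] ndvd incl; apply/subconjP/contraT => /subconjP nOK.
have cK : in_primeTI G K r O c.
  move=> I sIO sIK; rewrite markc // /delta_at; case: eqP => [IO | _].
    by case: nOK; rewrite -IO.
  exact: dvdz0.
have := incl O sOG c cK O (subxx _) sOL.
by rewrite markc // /delta_at eqxx dvdzE (negbTE ndvd).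
Qed.

Lemma primeTI_sub_Oup (p : nat) K L :
  subconjG G (Oup p L) (Oup p K) -> primeTI_sub G K p L p.
Proof.
move=> sOLK H sHG c cK J sJH sJL; rewrite dvdz_burnside_mark_Oup //.
apply: cK; first exact: subset_trans (Oup_sub p J) sJH.
apply: subconj_trans (subconj_Oup p sJL) (subconj_trans sOLK _).
exact/subconj_sub/Oup_sub.
Qed.

Lemma primeTI_sub_0_Oup (p : nat) K L :
  subconjG G (Oup p L) K -> primeTI_sub G K 0 L p.
Proof.
move=> sOLK H sHG c cK J sJH sJL; rewrite dvdz_burnside_mark_Oup //.
have sOJH : Oup p J \subset H := subset_trans (Oup_sub p J) sJH.
have := cK _ sOJH (subconj_trans (subconj_Oup p sJL) sOLK).
by rewrite dvd0z => /eqP->; apply: dvdz0.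
Qed.

End PrimeIdeals.

Theorem theorem4p16 (gT : finGroupType) (G H K : {group gT}) (p q : nat)
  (sHG : H \subset G) (sKG : K \subset G) (pp : prime p) (pq : prime q) :
  (primeTI_sub G K 0 H 0 <-> subconjG G H K) /\
  ((primeTI_sub G H 0 H p /\ ~ primeTI_sub G H p H 0) /\ ~ primeTI_sub G H p K 0) /\
  (primeTI_sub G K p H q <-> p = q /\ subconjG G (Oup p H) (Oup p K)) /\
  (primeTI_sub G K 0 H p <-> subconjG G (Oup p H) K).
Proof.
set O := Oup_group p H.
have sOH : subconjG G O H by apply/subconj_sub/Oup_sub.
have sOG : O \subset G := subset_trans (Oup_sub p H) sHG.
have markO := mark_vector_delta_p'part (Oup_id p H).
have p_ndvd_O : ~~ (p %| #|O|`_p^')%N by rewrite -p'natE // part_pnat.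
have not_p0 (L : {group gT}) : L \subset G -> ~ primeTI_sub G H p L 0.
  by move/primeTI_sub_dvd=> dvd /dvd; rewrite dvd0n gtn_eqF ?prime_gt0.
split; last split; last split.
- split; last exact: primeTI_sub_subconj.
  apply: subconj_of_primeTI_sub sHG (subconj_sub G (subxx _)) _ _.
    exact: mark_vector_delta_card.
  by rewrite dvd0n -lt0n cardG_gt0.
- by split; [split; [exact/primeTI_sub_0_Oup | exact: not_p0] | exact: not_p0].
- split=> [incl | [<- sOK]]; last exact: primeTI_sub_Oup.
  have /eqP pq_eq : q == p by rewrite -dvdn_prime2 // (primeTI_sub_dvd sHG incl).
  subst q; split=> //; rewrite -(Oup_id p H).
  exact/subconj_Oup/(subconj_of_primeTI_sub sOG sOH markO p_ndvd_O incl).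
- split; last exact: primeTI_sub_0_Oup.
  exact: subconj_of_primeTI_sub sOG sOH markO p_ndvd_O.
Qed.
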